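(* Let $k$ be a field, $R=k[[x,y,z]]/(y^2-xz,\ x^2y-z^2,\ x^3-yz)$ (so $R\cong k[[t^3,t^4,t^5]]$), $I=(x,y)\subseteq R$, and $M=R^{\oplus 3}/\operatorname{im}(A)$ where $A=\begin{pmatrix} y & z & x^2\\ -x & -y & -z\\ z & x^2 & xy\end{pmatrix}$ acting on column vectors. Then $M$ is a torsion-free indecomposable $R$-module of rank $2$ with $\mu_R(M)=3$, $M$ is strongly self dual with respect to $I$ (so $E=\operatorname{End}_R(M)$ is a local ring carrying an $R^*$-algebra structure with $M_*\cong\operatorname{Hom}_R(M,I)$ as right $E$-modules), $M$ is a cyclic left $E$-module, and $M_*\otimes_E M$ has a nonzero torsion element.
   Context: An $R$-algebra $E$ (possibly noncommutative) is an $R^*$-algebra if there is a map of abelian groups $(-)^*:E\to E$ with $(ab)^*=b^*a^*$, $1_E^*=1_E$, $(ra)^*=ra^*$ for $r\in R$, and $a^{**}=a$ for all $a,b\in E$. $M$ is a left $\operatorname{End}_R(M)$-module via $f\cdot x=f(x)$, and $M_*$ denotes $M$ regarded as a right module via $x\cdot f=f^*(x)$. An $R$-module $M$ is strongly self dual with respect to an $R$-module $N$ if there is an $R$-module isomorphism $\alpha:M\to\operatorname{Hom}_R(M,N)$ with $\alpha(x)(y)=\alpha(y)(x)$ for all $x,y\in M$; the $R^*$-structure is $f^*=\alpha^{-1}\circ\operatorname{Hom}_R(f,N)\circ\alpha$. $\mu_R(M)$ is the minimal number of generators. *)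

From HB Require Import structures.
From mathcomp Require Import all_boot all_algebra.
From Stdlib Require Import ClassicalEpsilon.
Set Implicit Arguments. Unset Strict Implicit. Unset Printing Implicit Defensive.
Import GRing.Theory.
Local Open Scope ring_scope.

Definition Rlinear (R : comNzRingType) (U V : lmodType R) (f : U -> V) :=
  forall (r : R) (u v : U), f (r *: u + v) = r *: f u + f v.

Definition ideal2 (R : comNzRingType) (a b : R) (r : R) : Prop :=
  exists c d : R, r = c * a + d * b.

Definition Amat (R : comNzRingType) (x y z : R) : 'M[R]_3 :=
  \matrix_(i < 3, j < 3)
    nth 0 (nth [::] [:: [:: y; z; x ^+ 2]; [:: - x; - y; - z]; [:: z; x ^+ 2; x * y]] i) j.

Section ModuleNotions.
Variables (R : comNzRingType) (M : lmodType R).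

Definition nzd (r : R) := forall s : R, r * s = 0 -> s = 0.

Definition torsion_free := forall (r : R) (m : M), nzd r -> r *: m = 0 -> m = 0.

Definition lin_indep n (v : 'I_n -> M) :=
  forall c : 'I_n -> R, \sum_(i < n) c i *: v i = 0 -> forall i, c i = 0.

Definition has_rank (n : nat) :=
  (exists v : 'I_n -> M, lin_indep v) /\
  (forall m (v : 'I_m -> M), lin_indep v -> (m <= n)%N).

Definition generates n (v : 'I_n -> M) :=
  forall m : M, exists c : 'I_n -> R, m = \sum_(i < n) c i *: v i.

Definition min_gens (n : nat) :=
  (exists v : 'I_n -> M, generates v) /\
  (forall m (v : 'I_m -> M), generates v -> (n <= m)%N).

Definition submodule (N : M -> Prop) :=
  N 0 /\ (forall (r : R) u v, N u -> N v -> N (r *: u + v)).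

Definition indecomposable :=
  (exists m : M, m <> 0) /\
  forall N1 N2 : M -> Prop, submodule N1 -> submodule N2 ->
    (forall m, exists a b, N1 a /\ N2 b /\ m = a + b) ->
    (forall m, N1 m -> N2 m -> m = 0) ->
    (forall m, N1 m -> m = 0) \/ (forall m, N2 m -> m = 0).

Definition endo (f : M -> M) := Rlinear f.

Definition E_unit (f : M -> M) :=
  exists g, endo g /\ (forall m, f (g m) = m) /\ (forall m, g (f m) = m).

(* E is a local ring: 1 <> 0 and the sum of two non-units is a non-unit *)
Definition local_End :=
  ~ (forall m : M, m = 0) /\
  forall f g, endo f -> endo g -> ~ E_unit f -> ~ E_unit g ->
    ~ E_unit (fun m => f m + g m).

Definition cyclic_over_End := exists m0 : M, forall m, exists f, endo f /\ m = f m0.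

Section SelfDual.
Variables (I : R -> Prop) (alpha : M -> M -> R).

Definition hom_into (g : M -> R) :=
  (forall (r : R) u v, g (r *: u + v) = r * g u + g v) /\ (forall u, I (g u)).

Definition strongly_self_dual :=
  (forall x, hom_into (alpha x)) /\
  (forall (r : R) x x' y, alpha (r *: x + x') y = r * alpha x y + alpha x' y) /\
  (forall x x', (forall y, alpha x y = alpha x' y) -> x = x') /\
  (forall g, hom_into g -> exists x, forall y, g y = alpha x y) /\
  (forall x y, alpha x y = alpha y x).

(* f^* = alpha^-1 o Hom_R(f, I) o alpha *)
Definition star (f : M -> M) (x : M) : M :=
  epsilon (inhabits 0) (fun x' => forall y, alpha x' y = alpha x (f y)).

Definition Rstar_structure :=
  (forall f, endo f -> endo (star f)) /\
  (forall f g, endo f -> endo g -> forall x,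
      star (fun m => f m + g m) x = star f x + star g x) /\
  (forall f g, endo f -> endo g -> forall x, star (fun m => f (g m)) x = star g (star f x)) /\
  (forall x, star id x = x) /\
  (forall (r : R) f, endo f -> forall x, star (fun m => r *: f m) x = r *: star f x) /\
  (forall f, endo f -> forall x, star (star f) x = f x).

(* alpha : M_* -> Hom_R(M, I) is a map of right E-modules, where
   x . f = f^*(x) on M_* and g . f = g o f on Hom_R(M, I) *)
Definition right_E_iso :=
  forall f, endo f -> forall x y, alpha (star f x) y = alpha x (f y).

(* M_* (x)_E M : finite formal sums  sum_i x_i (x) m_i  (lists of pairs),
   modulo the congruence generated by biadditivity and E-balancedness
   (x . f) (x) m = x (x) (f m). *)
Inductive tequiv : seq (M * M) -> seq (M * M) -> Prop :=
| te_refl s : tequiv s s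
| te_sym s t : tequiv s t -> tequiv t s
| te_trans s t u : tequiv s t -> tequiv t u -> tequiv s u
| te_cat s1 s2 t1 t2 : tequiv s1 t1 -> tequiv s2 t2 -> tequiv (s1 ++ s2) (t1 ++ t2)
| te_comm s t : tequiv (s ++ t) (t ++ s)
| te_zero m : tequiv [:: (0, m)] [::]
| te_addl a a' m : tequiv [:: (a + a', m)] [:: (a, m); (a', m)]
| te_addr a m m' : tequiv [:: (a, m + m')] [:: (a, m); (a, m')]
| te_bal f a m : endo f -> tequiv [:: (star f a, m)] [:: (a, f m)].

Definition tscale (r : R) (s : seq (M * M)) : seq (M * M) :=
  map (fun p => (p.1, r *: p.2)) s.

Definition tensor_has_nonzero_torsion :=
  exists (s : seq (M * M)) (r : R),
    nzd r /\ tequiv (tscale r s) [::] /\ ~ tequiv s [::].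

End SelfDual.
End ModuleNotions.

From HB Require Import structures.
From mathcomp Require Import all_boot all_algebra.
From mathcomp Require Import ring zify.
From Stdlib Require Import Classical ClassicalEpsilon.
Set Implicit Arguments. Unset Strict Implicit. Unset Printing Implicit Defensive.
Import GRing.Theory.
Local Open Scope ring_scope.

(* [R = k[[t^3, t^4, t^5]]] is given by its coefficient map [phi], with
   [x, y, z = t^3, t^4, t^5].  A column [(a, b, c)] lies in the image of [A]
   iff [x a + y b = 0 = z b + x c]; hence [M] embeds into [R^2], so it is
   torsion-free of rank 2, and the columns of [A] have all their entries in the
   maximal ideal [m], so [M / mM = k^3] and [mu(M) = 3].  Comparing low-order
   coefficients shows that an endomorphism [f] acts on [M / mM] with
   determinant [eps(f)^3], where [eps(f)] is the [g3]-coordinate of [f(g3)]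
   modulo [m]; by Cayley-Hamilton [f] is invertible iff [eps(f) != 0], and [eps]
   is additive, so [End M] is local and [M] is indecomposable.  An explicit
   symmetric form with values in [(x, y)] identifies [M] with [Hom(M, (x, y))]. *)

Lemma sum_delta (T : pzSemiRingType) (n j : nat) (F : nat -> T) :
  \sum_(i < n.+1) ((nat_of_ord i == j)%:R * F i) = if (j <= n)%N then F j else 0.
Proof.
have neq_j i : nat_of_ord i != j -> (nat_of_ord i == j)%:R * F i = 0.
  by move/negbTE->; rewrite mul0r.
case: ifP => hj; last first.
  by rewrite big1 // => i _; apply: neq_j; apply: contraFN hj => /eqP <-; rewrite -ltnS.
rewrite (bigD1 (Ordinal (hj : (j < n.+1)%N))) //= eqxx mul1r big1 ?addr0 //.
by move=> i hi; apply: neq_j; apply: contra hi => /eqP hij; apply/eqP/val_inj.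
Qed.

Lemma dependent3 (T : comNzRingType) (p1 q1 p2 q2 p3 q3 : T) : exists c1 c2 c3,
  (c1 != 0 \/ c2 != 0 \/ c3 != 0) /\ c1 * p1 + c2 * p2 + c3 * p3 = 0 /\
  c1 * q1 + c2 * q2 + c3 * q3 = 0.
Proof.
(* The [2 x 2] minors give a relation, unless they all vanish. *)
pose d1 := p2 * q3 - p3 * q2; pose d2 := p3 * q1 - p1 * q3; pose d3 := p1 * q2 - p2 * q1.
have cramer : d1 * p1 + d2 * p2 + d3 * p3 = 0 /\ d1 * q1 + d2 * q2 + d3 * q3 = 0.
  by split; rewrite /d1 /d2 /d3; ring.
have [nz1|e1] := boolP (d1 != 0); first by exists d1, d2, d3; split; [left|].
have [nz2|e2] := boolP (d2 != 0); first by exists d1, d2, d3; split; [right; left|].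
have [nz3|/negPn/eqP e3] := boolP (d3 != 0); first by exists d1, d2, d3; split; [right; right|].
have [p10|p1n0] := eqVneq p1 0.
  have [q10|q1n0] := eqVneq q1 0.
    by exists 1, 0, 0; split; [left; exact: oner_neq0 | rewrite p10 q10; split; ring].
  exists q2, (- q1), 0; split; first by right; left; rewrite oppr_eq0.
  split; last by ring.
  by transitivity d3; [rewrite /d3 p10; ring | exact: e3].
exists p2, (- p1), 0; split; first by right; left; rewrite oppr_eq0.
split; first by ring.
by transitivity (- d3); [rewrite /d3; ring | rewrite e3 oppr0].
Qed.

Lemma det_mx3_sparse (T : comNzRingType) (C : 'M[T]_3) :
  C (lift ord0 (lift ord0 ord0)) ord0 = 0 ->
  C (lift ord0 (lift ord0 ord0)) (lift ord0 ord0) = 0 ->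
  C ord0 (lift ord0 ord0) = 0 ->
  \det C = C ord0 ord0 * C (lift ord0 ord0) (lift ord0 ord0) *
           C (lift ord0 (lift ord0 ord0)) (lift ord0 (lift ord0 ord0)).
Proof.
move=> h1 h2 h3.
rewrite (expand_det_row _ (lift ord0 (lift ord0 ord0))) !big_ord_recl big_ord0 h1 h2.
rewrite !mul0r !add0r addr0 /cofactor (expand_det_row _ ord0) !big_ord_recl big_ord0 !mxE /=.
have e0 : lift (lift ord0 (lift ord0 ord0)) (ord0 : 'I_2) = ord0 :> 'I_3 by apply: val_inj.
have e1 : lift (lift ord0 (lift ord0 ord0)) (lift ord0 ord0 : 'I_2) = lift ord0 ord0 :> 'I_3.
  by apply: val_inj.
rewrite e0 e1 h3 mul0r addr0 /cofactor det_mx11 !mxE /=.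
have e2 : lift (ord0 : 'I_2) (ord0 : 'I_1) = lift ord0 ord0 :> 'I_2 by apply: val_inj.
by rewrite e2 e1 /bump /= !exprS !expr0; ring.
Qed.

(* Cayley--Hamilton: writing [char_poly B = c + Q * 'X] gives [Q(B) B = - c]. *)
Lemma char_poly_inverse (T : comNzRingType) n (B : 'M[T]_n.+1) s :
  (char_poly B)`_0 * s = 1 ->
  exists q : {poly T}, horner_mx B q *m B = 1%:M /\ B *m horner_mx B q = 1%:M.
Proof.
move=> hs; pose chi := char_poly B; pose Q := drop_poly 1 chi.
have hchi : chi = (chi`_0)%:P + Q * 'X.
  rewrite -[LHS](poly_take_drop 1) expr1; congr (_ + _).
  by apply/polyP => i; rewrite coef_take_poly coefC; case: i.
have QB : horner_mx B Q * B = - (chi`_0)%:M.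
  have := Cayley_Hamilton B; rewrite -/chi {1}hchi rmorphD rmorphM /= horner_mx_C horner_mx_X.
  by move/eqP; rewrite addrC addr_eq0 => /eqP.
have BQ : B * horner_mx B Q = horner_mx B Q * B.
  by have := congr1 (horner_mx B) (mulrC (polyX T) Q); rewrite !rmorphM /= horner_mx_X.
exists ((- s) *: Q); rewrite linearZ /= -scalemxAl -scalemxAr !mulmxE BQ QB.
by rewrite scalerN scaleNr opprK scale_scalar_mx mulrC hs.
Qed.

Section Vec3.
Variable T : nzRingType.

Definition vec3 (a b c : T) : 'cV[T]_3 := \col_i nth 0 [:: a; b; c] i.
Lemma vec3_split a b c :
  vec3 a b c = a *: vec3 1 0 0 + b *: vec3 0 1 0 + c *: vec3 0 0 1.
Proof.
apply/matrixP => i j; rewrite !mxE.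
by case: i => [[|[|[|i]]] hi] //=; rewrite ?mulr1 ?mulr0 ?addr0 ?add0r.
Qed.

Lemma vec3E (v : 'cV[T]_3) : v = vec3 (v 0 0) (v 1 0) (v 2 0).
Proof.
apply/matrixP => i j; rewrite !mxE (ord1 j).
by case: i => [[|[|[|i]]] hi] //=; congr (v _ _); apply: val_inj.
Qed.

Lemma vec3_inj a b c a' b' c' :
  vec3 a b c = vec3 a' b' c' -> [/\ a = a', b = b' & c = c'].
Proof.
move=> h; have := congr1 (fun v : 'cV[T]_3 => (v 0 0, v 1 0, v 2 0)) h.
by rewrite /= !mxE /= => [[-> -> ->]].
Qed.

Lemma vec30 : vec3 0 0 0 = 0.
Proof. by apply/matrixP => i j; rewrite !mxE; case: i => [[|[|[|i]]] hi]. Qed.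

Lemma vec3D a b c a' b' c' : vec3 a b c + vec3 a' b' c' = vec3 (a + a') (b + b') (c + c').
Proof. by apply/matrixP => i j; rewrite !mxE; case: i => [[|[|[|i]]] hi]. Qed.

Lemma vec3Z r a b c : r *: vec3 a b c = vec3 (r * a) (r * b) (r * c).
Proof. by apply/matrixP => i j; rewrite !mxE; case: i => [[|[|[|i]]] hi] //=; rewrite mulr0. Qed.

End Vec3.

(** * Modules, endomorphisms and self-duality *)

Section LinearMaps.
Variables (R : comNzRingType) (U V : lmodType R) (f : U -> V).
Hypothesis f_lin : Rlinear f.

Lemma Rlinear0 : f 0 = 0.
Proof.
have h := f_lin 1 0 0; rewrite scale1r addr0 scale1r in h.
by apply: (addrI (f 0)); rewrite -h addr0.
Qed.

Lemma RlinearD u v : f (u + v) = f u + f v.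
Proof. by rewrite -{1}(scale1r u) f_lin scale1r. Qed.

Lemma RlinearZ r u : f (r *: u) = r *: f u.
Proof. by rewrite -(addr0 (r *: u)) f_lin Rlinear0 addr0. Qed.

Lemma RlinearN u : f (- u) = - f u.
Proof. by rewrite -scaleN1r RlinearZ scaleN1r. Qed.

End LinearMaps.

Section ModuleTheory.
Variables (R : comNzRingType) (M : lmodType R).

Lemma endo_id : endo (@id M). Proof. by []. Qed.

Lemma endo_comp (f g : M -> M) : endo f -> endo g -> endo (fun m => f (g m)).
Proof. by move=> hf hg r u v; rewrite hg hf. Qed.

Lemma endo_add (f g : M -> M) : endo f -> endo g -> endo (fun m => f m + g m).
Proof. by move=> hf hg r u v; rewrite hf hg scalerDr addrACA. Qed.

Lemma endo_scale r (f : M -> M) : endo f -> endo (fun m => r *: f m).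
Proof. by move=> hf s u v; rewrite hf scalerDr !scalerA mulrC. Qed.

Lemma endo_sub (f : M -> M) : endo f -> endo (fun m => m - f m).
Proof. by move=> hf; apply: endo_add => // r u v; rewrite hf opprD scalerN. Qed.

Lemma endo_scalar r : endo (fun m : M => r *: m).
Proof. by move=> s u v; rewrite scalerDr !scalerA mulrC. Qed.

Lemma E_unit_inj (f : M -> M) m : E_unit f -> f m = 0 -> m = 0.
Proof. by move=> [g [hg [_ gf]]] fm0; rewrite -(gf m) fm0 Rlinear0. Qed.

Section Submodule.
Variable N : M -> Prop.
Hypothesis hN : submodule N.

Lemma submoduleD u v : N u -> N v -> N (u + v).
Proof. by move=> hu hv; rewrite -(scale1r u); exact: hN.2. Qed.

Lemma submoduleZ r u : N u -> N (r *: u).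
Proof. by move=> hu; rewrite -(addr0 (_ *: u)); apply: hN.2 => //; exact: hN.1. Qed.

Lemma submoduleB u v : N u -> N v -> N (u - v).
Proof. by move=> hu hv; rewrite -scaleN1r; apply: submoduleD => //; exact: submoduleZ. Qed.

End Submodule.

Lemma complement_projection (N1 N2 : M -> Prop) :
  submodule N1 -> submodule N2 ->
  (forall m, exists a b, N1 a /\ N2 b /\ m = a + b) ->
  (forall m, N1 m -> N2 m -> m = 0) ->
  exists p, [/\ endo p, forall m, N1 m -> p m = m & forall m, N2 m -> p m = 0].
Proof.
move=> hN1 hN2 hdec hint.
have hd m : exists a, N1 a /\ N2 (m - a).
  by have [a [b [ha [hb ->]]]] := hdec m; exists a; rewrite addrC addKr.
pose p m := proj1_sig (constructive_indefinite_description _ (hd m)).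
have hp m : N1 (p m) /\ N2 (m - p m).
  by rewrite /p; case: constructive_indefinite_description.
have p_uniq m a : N1 a -> N2 (m - a) -> p m = a.
  move=> ha hb; have [h1m h2m] := hp m; apply/eqP; rewrite -subr_eq0; apply/eqP.
  apply: hint; first exact: (submoduleB hN1).
  have -> : p m - a = (m - a) - (m - p m) by rewrite opprB [RHS]addrC [RHS]addrA subrK.
  exact: (submoduleB hN2).
exists p; split.
- move=> r u v; apply: (p_uniq _ (r *: p u + p v)).
    by apply: (submoduleD hN1); [apply: (submoduleZ hN1); case: (hp u) | case: (hp v)].
  rewrite opprD addrACA -scalerBr.
  by apply: (submoduleD hN2); [apply: (submoduleZ hN2); case: (hp u) | case: (hp v)].
- by move=> m hm; apply: p_uniq; rewrite // subrr; exact: hN2.1.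
- by move=> m hm; apply: p_uniq; rewrite ?subr0 //; exact: hN1.1.
Qed.

Lemma local_End_indecomposable : local_End M -> indecomposable M.
Proof.
move=> [nontriv loc]; split; first by apply: not_all_ex_not.
move=> N1 N2 hN1 hN2 hdec hint.
have [p [hp p_N1 p_N2]] := complement_projection hN1 hN2 hdec hint.
(* The projections [p] and [id - p] onto the two summands add up to [id]. *)
have [up|nup] := classic (E_unit p).
  by right=> m hm; apply: (E_unit_inj up); exact: p_N2.
have [uq|nuq] := classic (E_unit (fun m => m - p m)).
  by left=> m hm; apply: (E_unit_inj uq); rewrite p_N1 // subrr.
exfalso; apply: (loc _ _ hp (endo_sub hp) nup nuq).
by exists id; split=> //; split=> m; rewrite addrC subrK.
Qed.

Lemma lin_indep_widen n m (le_nm : (n <= m)%N) (v : 'I_m -> M) :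
  lin_indep v -> lin_indep (fun i : 'I_n => v (widen_ord le_nm i)).
Proof.
move=> hv c hc i.
pose c' (j : 'I_m) := if insub (val j) is Some i' then c i' else 0.
have c'w i' : c' (widen_ord le_nm i') = c i'.
  by rewrite /c' insubT ?ltn_ord //= => h; congr c; apply: val_inj.
suff /hv/(_ (widen_ord le_nm i)) : \sum_(j < m) c' j *: v j = 0 by rewrite c'w.
rewrite (bigID (fun j : 'I_m => (j < n)%N)) /= [X in _ + X]big1 ?addr0; last first.
  by move=> j /negbTE hj; rewrite /c' insubF ?scale0r.
by rewrite big_ord_narrow; under eq_bigr do rewrite c'w.
Qed.

Lemma lin_indep_bound n : (forall v : 'I_n.+1 -> M, ~ lin_indep v) ->
  forall m (v : 'I_m -> M), lin_indep v -> (m <= n)%N.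
Proof.
move=> dep m v hv; rewrite leqNgt; apply/negP => lt_nm.
exact: (dep _ (lin_indep_widen (le_nm := lt_nm) hv)).
Qed.

End ModuleTheory.

Section SelfDuality.
Variables (R : comNzRingType) (M : lmodType R) (I : R -> Prop) (alpha : M -> M -> R).
Hypothesis ssd : strongly_self_dual I alpha.

Lemma alpha_inj m m' : (forall u, alpha m u = alpha m' u) -> m = m'.
Proof. by case: ssd => _ [_ [inj _]]; exact: inj. Qed.

Lemma alpha_linl r u v m : alpha (r *: u + v) m = r * alpha u m + alpha v m.
Proof. by case: ssd => _ [lin _]; exact: lin. Qed.

Lemma alpha_linr m r u v : alpha m (r *: u + v) = r * alpha m u + alpha m v.
Proof. by case: ssd => hom _; exact: (hom m).1. Qed.

Lemma alpha0l m : alpha 0 m = 0.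
Proof.
have h := alpha_linl 1 0 0 m; rewrite scale1r addr0 mul1r in h.
by apply: (addrI (alpha 0 m)); rewrite -h addr0.
Qed.

Lemma alpha0r m : alpha m 0 = 0.
Proof.
have h := alpha_linr m 1 0 0; rewrite scale1r addr0 mul1r in h.
by apply: (addrI (alpha m 0)); rewrite -h addr0.
Qed.

Lemma alphaDl u v m : alpha (u + v) m = alpha u m + alpha v m.
Proof. by have := alpha_linl 1 u v m; rewrite scale1r mul1r. Qed.

Lemma alphaDr m u v : alpha m (u + v) = alpha m u + alpha m v.
Proof. by have := alpha_linr m 1 u v; rewrite scale1r mul1r. Qed.

Lemma alphaZl r u m : alpha (r *: u) m = r * alpha u m.
Proof. by rewrite -[r *: u]addr0 alpha_linl alpha0l addr0. Qed.

Lemma alphaZr r m u : alpha m (r *: u) = r * alpha m u.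
Proof. by rewrite -[r *: u]addr0 alpha_linr alpha0r addr0. Qed.

Lemma star_spec f : endo f -> forall m u, alpha (star alpha f m) u = alpha m (f u).
Proof.
move=> hf m.
have [m' hm'] : exists m', forall u, alpha m (f u) = alpha m' u.
  case: ssd => hom [_ [_ [surj _]]]; apply: surj; split; last by move=> u; exact: (hom m).2.
  by move=> r u v; rewrite hf alpha_linr.
apply: (epsilon_spec (inhabits 0) (fun x' => forall u, alpha x' u = alpha m (f u))).
by exists m' => u; rewrite hm'.
Qed.

Lemma star_eq f m m' : endo f -> (forall u, alpha m (f u) = alpha m' u) ->
  star alpha f m = m'.
Proof. by move=> hf hm; apply: alpha_inj => u; rewrite star_spec. Qed.

Lemma endo_star f : endo f -> endo (star alpha f).
Proof.
move=> hf r u v; apply: star_eq => // w.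
by rewrite !alpha_linl !star_spec.
Qed.

Lemma ssd_Rstar_structure : Rstar_structure alpha.
Proof.
split; first exact: endo_star.
split; first by move=> f g hf hg m; apply: star_eq => [|w]; [exact: endo_add|
  rewrite alphaDr alphaDl !star_spec].
split; first by move=> f g hf hg m; apply: star_eq => [|w]; [exact: endo_comp|
  rewrite !star_spec].
split; first by move=> m; apply: star_eq; [exact: endo_id|].
split; first by move=> r f hf m; apply: star_eq => [|w]; [exact: endo_scale|
  rewrite alphaZr alphaZl star_spec].
move=> f hf m; apply: star_eq; first exact: endo_star.
by move=> w; case: ssd => _ [_ [_ [_ sym]]]; rewrite sym star_spec // sym.
Qed.

Lemma tequiv_scale a r m : tequiv alpha [:: (a, r *: m)] [:: (r *: a, m)].
Proof.
have hr : endo (fun u : M => r *: u) := endo_scalar r.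
have <- : star alpha (fun u => r *: u) a = r *: a.
  by apply: star_eq => // u; rewrite alphaZr alphaZl.
by apply: te_sym; exact: te_bal hr.
Qed.

Lemma tequiv_pair0r a : tequiv alpha [:: (a, 0)] [::].
Proof.
have h0 : endo (fun _ : M => 0 : M) by move=> r u v; rewrite scaler0 addr0.
have s0 : star alpha (fun _ => 0) a = 0 by apply: star_eq => // u; rewrite alpha0l alpha0r.
apply: (@te_trans _ _ _ _ [:: (0, a)]); last exact: te_zero.
by apply: te_sym; rewrite -{1}s0; exact: (te_bal alpha a a h0).
Qed.

Lemma ssd_right_E_iso : right_E_iso alpha.
Proof. by move=> f hf m u; rewrite star_spec. Qed.

End SelfDuality.

Section TensorInvariant.
Variables (R : comNzRingType) (M : lmodType R) (alpha : M -> M -> R).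
Variables (V : zmodType) (Phi : M -> M -> V).
Hypothesis PhiDl : forall a a' m, Phi (a + a') m = Phi a m + Phi a' m.
Hypothesis PhiDr : forall a m m', Phi a (m + m') = Phi a m + Phi a m'.
Hypothesis Phi_balanced : forall f a m, endo f -> Phi (star alpha f a) m = Phi a (f m).

Lemma tequiv_Phi s t : tequiv alpha s t ->
  \sum_(p <- s) Phi p.1 p.2 = \sum_(p <- t) Phi p.1 p.2.
Proof.
have Phi0 m : Phi 0 m = 0 by apply: (addrI (Phi 0 m)); rewrite -PhiDl !addr0.
elim=> {s t} //.
- by move=> s t u _ -> _ ->.
- by move=> s1 s2 t1 t2 _ h1 _ h2; rewrite !big_cat h1 h2.
- by move=> s t; rewrite !big_cat /= addrC.
- by move=> m; rewrite big_seq1 big_nil Phi0.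
- by move=> a a' m; rewrite big_seq1 !big_cons big_nil PhiDl addr0.
- by move=> a m m'; rewrite big_seq1 !big_cons big_nil PhiDr addr0.
- by move=> f a m hf; rewrite !big_seq1 Phi_balanced.
Qed.

End TensorInvariant.

(** * The ring [k[[t^3, t^4, t^5]]] *)

Section CoefficientMap.
Variables (k : fieldType) (R : comNzRingType) (phi : R -> nat -> k).
Hypothesis phi_add : forall a b n, phi (a + b) n = phi a n + phi b n.
Hypothesis phi_one : forall n, phi 1 n = (n == 0%N)%:R.
Hypothesis phi_mul : forall a b n,
  phi (a * b) n = \sum_(i < n.+1) phi a i * phi b (n - i)%N.
Hypothesis phi_inj : forall a b, (forall n, phi a n = phi b n) -> a = b.
Hypothesis phi_im : forall f : nat -> k,
  (exists a, forall n, phi a n = f n) <-> (f 1%N = 0 /\ f 2%N = 0).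

Lemma phi0 n : phi 0 n = 0.
Proof. by apply: (addrI (phi 0 n)); rewrite -phi_add !addr0. Qed.

Lemma phiN a n : phi (- a) n = - phi a n.
Proof. by apply/eqP; rewrite -addr_eq0 -phi_add addNr phi0. Qed.

Lemma phiB a b n : phi (a - b) n = phi a n - phi b n.
Proof. by rewrite phi_add phiN. Qed.

Lemma phi_gap a : phi a 1 = 0 /\ phi a 2 = 0.
Proof. by apply/phi_im; exists a. Qed.

Lemma phi_mul_monomial (w : R) (d : nat) (hw : forall n, phi w n = (n == d)%:R) a n :
  phi (w * a) n = if (d <= n)%N then phi a (n - d) else 0.
Proof.
rewrite phi_mul; under eq_bigr do rewrite hw.
exact: (sum_delta n d (fun i => phi a (n - i)%N)).
Qed.

Lemma phi_mul_monomial_add (w : R) (d : nat) (hw : forall n, phi w n = (n == d)%:R) a n :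
  phi (w * a) (n + d) = phi a n.
Proof. by rewrite (phi_mul_monomial hw) leq_addl addnK. Qed.

Lemma phi_mul_monomial_lt (w : R) (d : nat) (hw : forall n, phi w n = (n == d)%:R) a n :
  (n < d)%N -> phi (w * a) n = 0.
Proof. by rewrite (phi_mul_monomial hw) ltnNge => /negbTE ->. Qed.

Lemma monomial_mul (w1 w2 : R) (d1 d2 : nat)
    (hw1 : forall n, phi w1 n = (n == d1)%:R) (hw2 : forall n, phi w2 n = (n == d2)%:R) n :
  phi (w1 * w2) n = (n == d1 + d2)%N%:R.
Proof.
rewrite (phi_mul_monomial hw1) hw2; case: leqP => h; first by congr (_%:R); apply/eqP/eqP; lia.
by have -> : (n == d1 + d2)%N = false by apply/eqP; lia.
Qed.

Lemma monomial_nzd (w : R) (d : nat) (hw : forall n, phi w n = (n == d)%:R) : nzd w.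
Proof.
move=> a wa0; apply: phi_inj => n.
by rewrite -(phi_mul_monomial_add hw) wa0 !phi0.
Qed.

Definition const_term (r : R) : k := phi r 0.

Lemma const_termM a b : const_term (a * b) = const_term a * const_term b.
Proof. by rewrite /const_term phi_mul big_ord_recl big_ord0 addr0. Qed.

Lemma const_term_zmod : zmod_morphism const_term.
Proof. by move=> a b; rewrite /const_term phiB. Qed.
HB.instance Definition _ := GRing.isZmodMorphism.Build R k const_term const_term_zmod.
Lemma const_term_monoid : monoid_morphism const_term.
Proof. by split; [rewrite /const_term phi_one | exact: const_termM]. Qed.
HB.instance Definition _ := GRing.isMonoidMorphism.Build R k const_term const_term_monoid.

Definition series (f : nat -> k) (h1 : f 1%N = 0) (h2 : f 2%N = 0) : R :=
  proj1_sig (constructive_indefinite_description _ (proj2 (phi_im f) (conj h1 h2))).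

Lemma seriesE f h1 h2 n : phi (@series f h1 h2) n = f n.
Proof. by rewrite /series; case: constructive_indefinite_description. Qed.

Definition const_series (c : k) : R :=
  @series (fun n => if n == 0%N then c else 0) erefl erefl.

Lemma const_term_const_series c : const_term (const_series c) = c.
Proof. by rewrite /const_term seriesE. Qed.

(* The first [n.+1] coefficients of [r^-1], by the usual recursion. *)
Fixpoint inv_coefs (r : R) (n : nat) : seq k :=
  match n with
  | 0 => [:: (phi r 0)^-1]
  | n'.+1 => let l := inv_coefs r n' in
      rcons l (- (phi r 0)^-1 * \sum_(i < n'.+1) nth 0 l i * phi r (n'.+1 - i)%N)
  end.

Definition inv_coef r n := nth 0 (inv_coefs r n) n.

Lemma size_inv_coefs r n : size (inv_coefs r n) = n.+1.
Proof. by elim: n => //= n IH; rewrite size_rcons IH. Qed.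

Lemma nth_inv_coefs r n i : (i <= n)%N -> nth 0 (inv_coefs r n) i = inv_coef r i.
Proof.
elim: n => [|n IH] hi; first by move: hi; rewrite leqn0 => /eqP ->.
rewrite leq_eqVlt in hi; case/orP: hi => [/eqP -> //| hi].
by rewrite /= nth_rcons size_inv_coefs hi IH.
Qed.

Lemma inv_coefS r n : inv_coef r n.+1 =
  - (phi r 0)^-1 * \sum_(i < n.+1) inv_coef r i * phi r (n.+1 - i)%N.
Proof.
rewrite /inv_coef /= nth_rcons size_inv_coefs ltnn eqxx; congr (_ * _).
by apply: eq_bigr => i _; rewrite nth_inv_coefs // -ltnS.
Qed.

Lemma inv_coef1 r : inv_coef r 1 = 0.
Proof. by rewrite inv_coefS big_ord_recl big_ord0 /= (phi_gap r).1 mulr0 addr0 mulr0. Qed.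

Lemma inv_coef2 r : inv_coef r 2 = 0.
Proof.
by rewrite inv_coefS !big_ord_recl big_ord0 /= inv_coef1 (phi_gap r).2 !(mulr0, mul0r, addr0).
Qed.

Lemma const_term_invertible r : const_term r != 0 -> exists s, r * s = 1.
Proof.
move=> h0; exists (series (inv_coef1 r) (inv_coef2 r)); rewrite mulrC.
apply: phi_inj => -[|n]; rewrite phi_one phi_mul.
  by rewrite big_ord_recl big_ord0 addr0 seriesE /inv_coef /= mulVf.
rewrite big_ord_recr /= subnn seriesE inv_coefS mulNr.
under eq_bigr do rewrite seriesE.
by rewrite mulNr mulrAC mulVf // mul1r subrr.
Qed.

Section Generators.
Variables (x y z : R).
Hypothesis hx : forall n, phi x n = (n == 3%N)%:R.
Hypothesis hy : forall n, phi y n = (n == 4%N)%:R.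
Hypothesis hz : forall n, phi z n = (n == 5%N)%:R.

Lemma yy_xz : y * y = x * z.
Proof. by apply: phi_inj => n; rewrite (monomial_mul hy hy) (monomial_mul hx hz). Qed.

Lemma xxx_yz : x * (x * x) = y * z.
Proof.
by apply: phi_inj => n; rewrite (monomial_mul hx (monomial_mul hx hx)) (monomial_mul hy hz).
Qed.

Lemma xxy_zz : x * (x * y) = z * z.
Proof.
by apply: phi_inj => n; rewrite (monomial_mul hx (monomial_mul hx hy)) (monomial_mul hz hz).
Qed.

Lemma eq_mod_relations (e1 e2 h1 h2 h3 : R) :
  e1 - e2 = (y * y - x * z) * h1 + (x * (x * x) - y * z) * h2 + (x * (x * y) - z * z) * h3 ->
  e1 = e2.
Proof. by rewrite yy_xz xxx_yz xxy_zz !subrr !mul0r !addr0 => /eqP; rewrite subr_eq0 => /eqP. Qed.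

Lemma nzd_x : nzd x. Proof. exact: monomial_nzd hx. Qed.
Lemma nzd_y : nzd y. Proof. exact: monomial_nzd hy. Qed.

Lemma phi_mulxS a n : phi (x * a) n.+3 = phi a n.
Proof. by rewrite -addn3 (phi_mul_monomial_add hx). Qed.

Lemma phi_mulyS a n : phi (y * a) n.+4 = phi a n.
Proof. by rewrite -addn4 (phi_mul_monomial_add hy). Qed.

Lemma phi_mulzS a n : phi (z * a) n.+4.+1 = phi a n.
Proof. by have := phi_mul_monomial_add hz a n; rewrite addnS addn4. Qed.

Lemma phi_mulx_lt a n : (n < 3)%N -> phi (x * a) n = 0.
Proof. exact/phi_mul_monomial_lt/hx. Qed.

Lemma phi_muly_lt a n : (n < 4)%N -> phi (y * a) n = 0.
Proof. exact/phi_mul_monomial_lt/hy. Qed.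

Lemma phi_mulz_lt a n : (n < 5)%N -> phi (z * a) n = 0.
Proof. exact/phi_mul_monomial_lt/hz. Qed.

(* Sort the exponents of [r] by their residue mod 3: [x] takes those
   divisible by 3, [y] those congruent to 1 and [z] those congruent to 2. *)
Definition cut3 (r : R) (e : nat) (n : nat) : k :=
  if (n %% 3 == 0)%N then phi r (n + e) else 0.

Lemma max_ideal_decomp r : const_term r = 0 -> exists a b c, r = x * a + y * b + z * c.
Proof.
move=> h0.
exists (@series (cut3 r 3) erefl erefl), (@series (cut3 r 4) erefl erefl),
  (@series (cut3 r 5) erefl erefl).
apply: phi_inj => n; rewrite !phi_add !(phi_mul_monomial hx, phi_mul_monomial hy,
  phi_mul_monomial hz) !seriesE /cut3.
case: (ltnP n 3) => hn.
  by case: n hn => [|[|[|n]]] // _; rewrite ?h0 ?(phi_gap r).1 ?(phi_gap r).2 /= ?addr0.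
repeat case: ifP => ?; rewrite ?addr0 ?add0r; try (exfalso; lia); congr (phi r _); lia.
Qed.

(** * The module [M] *)

(* [comb a b c = 0] iff [syzygy a b c] (lemma [comb0]), so that
   [a g1 + b g2 + c g3 |-> (x a + y b, z b + x c)] embeds [M] into [R ^ 2]. *)
Definition syzygy (a b c : R) := x * a + y * b = 0 /\ z * b + x * c = 0.

Lemma syzygy_image a b c : syzygy a b c -> exists u0 u1 u2,
  [/\ a = y * u0 + z * u1 + x ^+ 2 * u2, b = - x * u0 - y * u1 - z * u2 &
      c = z * u0 + x ^+ 2 * u1 + x * y * u2].
Proof.
move=> [h1 h2].
have hb0 : const_term b = 0.
  have := congr1 (phi^~ 4%N) h1.
  by rewrite phi_add phi_mulxS phi_mulyS phi0 (phi_gap a).1 add0r.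
have [p [q [s hb]]] := max_ideal_decomp hb0.
exists (- p), (- q), (- s).
have xa : x * a = - (y * b) by apply/eqP; rewrite -subr_eq0 opprK h1.
have xc : x * c = - (z * b) by apply/eqP; rewrite -subr_eq0 opprK addrC h2.
split; first 2 last.
- apply/eqP; rewrite -subr_eq0; apply/eqP; apply: nzd_x.
  by apply: (@eq_mod_relations _ _ 0 q s); rewrite mulrBr xc hb; ring.
- apply/eqP; rewrite -subr_eq0; apply/eqP; apply: nzd_x.
  by apply: (@eq_mod_relations _ _ (-q) s 0); rewrite mulrBr xa hb; ring.
- by rewrite hb; ring.
Qed.

Lemma syzygy_const_term a b c : syzygy a b c ->
  [/\ const_term a = 0, const_term b = 0 & const_term c = 0].
Proof.
move=> [h1 h2].
have := congr1 (phi^~ 3%N) h1; rewrite /= phi_add phi_mulxS phi_muly_lt // phi0 addr0.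
have := congr1 (phi^~ 4%N) h1; rewrite /= phi_add phi_mulxS phi_mulyS phi0 (phi_gap a).1.
have := congr1 (phi^~ 3%N) h2; rewrite /= phi_add phi_mulxS phi_mulz_lt // phi0.
by rewrite !add0r /const_term => -> -> ->.
Qed.

Lemma syzygy_eq0 a b c e u1 u2 h1 h2 h3 : syzygy a b c ->
  e = u1 * (x * a + y * b) + u2 * (z * b + x * c) + (y * y - x * z) * h1 +
      (x * (x * x) - y * z) * h2 + (x * (x * y) - z * z) * h3 -> e = 0.
Proof. by move=> [E1 E2] ->; rewrite E1 E2 yy_xz xxx_yz xxy_zz !subrr !(mulr0, mul0r, addr0). Qed.

Section Presentation.
Variables (M : lmodType R) (pi : 'cV[R]_3 -> M).
Hypothesis pi_lin : Rlinear pi.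
Hypothesis pi_surj : forall m : M, exists v, pi v = m.
Hypothesis pi_ker : forall v, pi v = 0 <-> exists u, v = Amat x y z *m u.

Definition g1 := pi (vec3 1 0 0).
Definition g2 := pi (vec3 0 1 0).
Definition g3 := pi (vec3 0 0 1).
Definition comb a b c := a *: g1 + b *: g2 + c *: g3.

Lemma pi_vec3 a b c : pi (vec3 a b c) = comb a b c.
Proof. by rewrite vec3_split !(RlinearD pi_lin) !(RlinearZ pi_lin). Qed.

Lemma Amat_vec3 u0 u1 u2 : Amat x y z *m vec3 u0 u1 u2 =
  vec3 (y * u0 + z * u1 + x ^+ 2 * u2) (- x * u0 - y * u1 - z * u2)
       (z * u0 + x ^+ 2 * u1 + x * y * u2).
Proof.
apply/matrixP => i j; rewrite !mxE !big_ord_recl big_ord0 !mxE /=.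
by case: i => [[|[|[|i]]] hi] //=; rewrite addr0 ?mulNr ?mulr1 ?mulr0 ?addr0 !addrA.
Qed.

Lemma comb_surj m : exists a b c, m = comb a b c.
Proof. by have [v <-] := pi_surj m; rewrite (vec3E v) pi_vec3; do 3 eexists. Qed.

Lemma comb0 a b c : comb a b c = 0 <-> syzygy a b c.
Proof.
split.
  rewrite -pi_vec3 => /pi_ker [u]; rewrite (vec3E u) Amat_vec3 => /vec3_inj [-> -> ->].
  by split; [apply: (@eq_mod_relations _ _ (- u 1 0) (u 2 0) 0) |
    apply: (@eq_mod_relations _ _ 0 (u 1 0) (u 2 0))]; ring.
move/syzygy_image => [u0 [u1 [u2 [ha hb hc]]]].
by rewrite -pi_vec3; apply/pi_ker; exists (vec3 u0 u1 u2); rewrite Amat_vec3 ha hb hc.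
Qed.

Lemma combD a b c a' b' c' : comb a b c + comb a' b' c' = comb (a + a') (b + b') (c + c').
Proof. by rewrite /comb !scalerDl [LHS]addrACA; congr (_ + _); exact: addrACA. Qed.

Lemma combZ r a b c : r *: comb a b c = comb (r * a) (r * b) (r * c).
Proof. by rewrite /comb !scalerDr !scalerA. Qed.

Lemma combN a b c : - comb a b c = comb (- a) (- b) (- c).
Proof. by rewrite -scaleN1r combZ !mulN1r. Qed.

Lemma comb_eq a b c a' b' c' :
  comb a b c = comb a' b' c' <-> syzygy (a - a') (b - b') (c - c').
Proof.
rewrite -comb0 -combD -combN.
by split; [move=> ->; rewrite subrr | move/eqP; rewrite subr_eq0 => /eqP].
Qed.

Definition preim (m : M) : 'cV[R]_3 :=
  proj1_sig (constructive_indefinite_description _ (pi_surj m)).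
Definition pre1 m := preim m 0 0.
Definition pre2 m := preim m 1 0.
Definition pre3 m := preim m 2 0.

Lemma combE m : m = comb (pre1 m) (pre2 m) (pre3 m).
Proof.
rewrite -pi_vec3 -vec3E /preim.
by case: constructive_indefinite_description.
Qed.

Lemma pre_comb a b c :
  syzygy (pre1 (comb a b c) - a) (pre2 (comb a b c) - b) (pre3 (comb a b c) - c).
Proof. by apply/comb_eq; rewrite -combE. Qed.

Lemma pre_lin r u v : syzygy (pre1 (r *: u + v) - (r * pre1 u + pre1 v))
  (pre2 (r *: u + v) - (r * pre2 u + pre2 v)) (pre3 (r *: u + v) - (r * pre3 u + pre3 v)).
Proof. by apply/comb_eq; rewrite -combE -combD -combZ -!combE. Qed.

Lemma g1E : g1 = comb 1 0 0. Proof. by rewrite /comb !scale0r !addr0 scale1r. Qed.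
Lemma g2E : g2 = comb 0 1 0. Proof. by rewrite /comb !scale0r addr0 add0r scale1r. Qed.
Lemma g3E : g3 = comb 0 0 1. Proof. by rewrite /comb !scale0r !add0r scale1r. Qed.

Lemma torsion_free_M : torsion_free M.
Proof.
move=> r m hr; rewrite (combE m) combZ => /comb0 [h1 h2]; apply/comb0.
by split; apply: hr; rewrite mulrDr ![r * (_ * _)]mulrCA.
Qed.

Lemma not_lin_indep3 (v : 'I_3 -> M) : ~ lin_indep v.
Proof.
move=> hv.
pose w i := (x * pre1 (v i) + y * pre2 (v i), z * pre2 (v i) + x * pre3 (v i)).
have [c1 [c2 [c3 [hnz [e1 e2]]]]] := dependent3 (w ord0).1 (w ord0).2
  (w (lift ord0 ord0)).1 (w (lift ord0 ord0)).2
  (w (lift ord0 (lift ord0 ord0))).1 (w (lift ord0 (lift ord0 ord0))).2.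
pose c (i : 'I_3) := nth 0 [:: c1; c2; c3] i.
have /hv c0 : \sum_(i < 3) c i *: v i = 0.
  rewrite !big_ord_recl big_ord0 addr0 (combE (v ord0)) (combE (v (lift _ _))).
  rewrite (combE (v (lift _ (lift _ _)))) !combZ !combD; apply/comb0.
  by split; [rewrite -e1 | rewrite -e2]; rewrite /w /c /=; ring.
by case: hnz => [/eqP[]|[/eqP[]|/eqP[]]]; [exact: c0 ord0 | exact: c0 (lift ord0 ord0) |
  exact: c0 (lift ord0 (lift ord0 ord0))].
Qed.

Lemma rank2_M : has_rank M 2.
Proof.
split; last exact: lin_indep_bound not_lin_indep3.
exists (fun i : 'I_2 => if i == ord0 then g1 else g3) => c.
rewrite !big_ord_recl big_ord0 addr0 /= g1E g3E !combZ combD !(mulr1, mulr0, addr0, add0r).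
move=> /comb0 []; rewrite mulr0 addr0 mulr0 add0r => /nzd_x c0 /nzd_x c1 [[|[|i]] hi] //.
  by rewrite (_ : Ordinal hi = ord0) //; apply: val_inj.
by rewrite (_ : Ordinal hi = lift ord0 ord0) //; apply: val_inj.
Qed.

Definition res1 m := const_term (pre1 m).
Definition res2 m := const_term (pre2 m).
Definition res3 m := const_term (pre3 m).

Lemma res_comb a b c : [/\ res1 (comb a b c) = const_term a,
  res2 (comb a b c) = const_term b & res3 (comb a b c) = const_term c].
Proof.
have [] := syzygy_const_term (pre_comb a b c); rewrite !raddfB.
by move=> /subr0_eq h1 /subr0_eq h2 /subr0_eq h3.
Qed.

Lemma res1_comb a b c : res1 (comb a b c) = const_term a. Proof. by case: (res_comb a b c). Qed.
Lemma res2_comb a b c : res2 (comb a b c) = const_term b. Proof. by case: (res_comb a b c). Qed.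
Lemma res3_comb a b c : res3 (comb a b c) = const_term c. Proof. by case: (res_comb a b c). Qed.

Lemma res3D u v : res3 (u + v) = res3 u + res3 v.
Proof. by rewrite (combE u) (combE v) combD !res3_comb raddfD. Qed.

(* The residue of [m] in [M / (x, y, z) M], which is [k ^ 3]. *)
Definition res_cV m : 'cV[k]_3 := vec3 (res1 m) (res2 m) (res3 m).

Lemma res_cV_comb a b c :
  res_cV (comb a b c) = vec3 (const_term a) (const_term b) (const_term c).
Proof. by rewrite /res_cV !res1_comb !res2_comb !res3_comb. Qed.

Lemma res_cV_sum (I : finType) (C : I -> R) (w : I -> M) :
  res_cV (\sum_j C j *: w j) = \sum_j const_term (C j) *: res_cV (w j).
Proof.
have res_cVD : {morph res_cV : u v / u + v}.
  by move=> u v; rewrite (combE u) (combE v) combD !res_cV_comb !raddfD vec3D.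
have res_cV0 : res_cV 0 = 0.
  rewrite (_ : 0 = comb 0 0 0) ?res_cV_comb ?raddf0 ?vec30 //.
  by rewrite /comb !scale0r !addr0.
rewrite (big_morph res_cV res_cVD res_cV0); apply: eq_bigr => j _.
by rewrite (combE (w j)) combZ !res_cV_comb vec3Z !const_termM.
Qed.

Definition gens (e : 'I_3) : M := nth 0 [:: g1; g2; g3] e.

Lemma gens_generate : generates gens.
Proof.
move=> m; have [a [b [c ->]]] := comb_surj m.
by exists (fun e : 'I_3 => nth 0 [:: a; b; c] e); rewrite !big_ord_recl big_ord0 addr0 addrA.
Qed.

Lemma res_cV_gens e i : res_cV (gens e) i 0 = (e == i)%:R.
Proof.
rewrite /gens; case: e => [[|[|[|e]]] he] //=; rewrite ?g1E ?g2E ?g3E res_cV_comb !mxE rmorph1 raddf0.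
all: by case: i => [[|[|[|i]]] hi].
Qed.

Lemma min_gens3_M : min_gens M 3.
Proof.
split; first by exists gens; exact: gens_generate.
move=> m v hv.
pose C e := proj1_sig (constructive_indefinite_description _ (hv (gens e))).
have gensE e : gens e = \sum_j C e j *: v j.
  by rewrite /C; case: constructive_indefinite_description.
have : (1%:M : 'M[k]_3) =
  \matrix_(e, j) const_term (C e j) *m \matrix_(j, i) res_cV (v j) i 0.
  apply/matrixP => e i; rewrite mxE -res_cV_gens gensE res_cV_sum mxE summxE.
  by apply: eq_bigr => j _; rewrite !mxE.
move/(congr1 mxrank); rewrite mxrank1 => rank3.
by rewrite rank3 (leq_trans (mxrankM_maxr _ _)) ?rank_leq_row.
Qed.

(** * Endomorphisms of [M] *)

Lemma endo_comb f a b c : endo f -> f (comb a b c) =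
  comb (a * pre1 (f g1) + b * pre1 (f g2) + c * pre1 (f g3))
       (a * pre2 (f g1) + b * pre2 (f g2) + c * pre2 (f g3))
       (a * pre3 (f g1) + b * pre3 (f g2) + c * pre3 (f g3)).
Proof.
move=> hf; rewrite {1}/comb !(RlinearD hf) !(RlinearZ hf).
by rewrite (combE (f g1)) (combE (f g2)) (combE (f g3)) !combZ !combD -!combE.
Qed.

(* [eps] is a ring morphism from [End M] to [k] whose kernel consists of
   the non-units, which makes [End M] local. *)
Definition eps (f : M -> M) := res3 (f g3).

(* Applying [f] to the relation [y g1 - x g2 + z g3 = 0] (the first column
   of [A]) and comparing the coefficients of [t^6], [t^7] and [t^8]. *)
Lemma endo_residues f : endo f -> [/\ res3 (f g1) = 0, res3 (f g2) = 0,
  res1 (f g2) = 0, res2 (f g2) = eps f & res1 (f g1) = eps f].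
Proof.
move=> hf; have /(congr1 f) : comb y (- x) z = 0 by apply/comb0; split; ring.
rewrite endo_comb // (Rlinear0 hf) => /comb0 [E1 E2].
rewrite /eps /res1 /res2 /res3 /const_term.
have h6 := congr1 (phi^~ 6%N) E1; have h7 := congr1 (phi^~ 7%N) E1.
have k6 := congr1 (phi^~ 6%N) E2; have k7 := congr1 (phi^~ 7%N) E2.
have k8 := congr1 (phi^~ 8%N) E2.
move: h6 h7 k6 k7 k8 => /=.
rewrite !(phi_add, phiN, phi0, mulNr, phi_mulxS, phi_mulyS, phi_mulzS).
rewrite ?phi_mulx_lt ?phi_muly_lt ?phi_mulz_lt // !(phi_gap _).1 !(phi_gap _).2.
rewrite ?oppr0 !(add0r, addr0, subr0, sub0r).
move=> /eqP; rewrite oppr_eq0 => /eqP h1 /eqP; rewrite subr_eq0 => /eqP h2 /eqP.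
rewrite oppr_eq0 => /eqP h3 h4 /eqP; rewrite addrC subr_eq0 => /eqP h5.
by split => //; rewrite h5 // h2.
Qed.

Lemma res3_endo f m : endo f -> res3 (f m) = eps f * res3 m.
Proof.
move=> hf; have [a [b [c ->]]] := comb_surj m; rewrite endo_comb // !res3_comb !raddfD /=.
case: (endo_residues hf) => h1 h2 _ _ _.
by rewrite !const_termM; move: h1 h2; rewrite /res3 /eps => -> ->; rewrite !mulr0 !add0r mulrC.
Qed.

Lemma eps_id : eps id = 1.
Proof. by rewrite /eps g3E res3_comb rmorph1. Qed.

Lemma eps_add f g : eps (fun m => f m + g m) = eps f + eps g.
Proof. exact: res3D. Qed.

Lemma eps_comp f g : endo f -> eps (fun m => f (g m)) = eps f * eps g.
Proof. by move=> hf; rewrite /eps res3_endo. Qed.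

Lemma E_unit_eps f : endo f -> E_unit f -> eps f != 0.
Proof.
move=> hf [g [hg [fg _]]]; apply/eqP => h.
have : eps (fun m => f (g m)) = 1 by rewrite /eps fg -eps_id.
by rewrite eps_comp // h mul0r => /eqP; rewrite eq_sym oner_eq0.
Qed.

Definition coords m := vec3 (pre1 m) (pre2 m) (pre3 m).

Lemma pi_coords m : pi (coords m) = m.
Proof. by rewrite /coords pi_vec3 -combE. Qed.

Definition endo_mx (f : M -> M) : 'M[R]_3 := \matrix_(i, j) coords (f (gens j)) i 0.

Lemma endo_mxE f : endo f -> forall v, f (pi v) = pi (endo_mx f *m v).
Proof.
move=> hf v; rewrite (vec3E v) pi_vec3 endo_comb // -pi_vec3; congr pi.
apply/matrixP => i j; rewrite !mxE !big_ord_recl big_ord0 !mxE /= addr0.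
by case: i => [[|[|[|i]]] hi] //=; rewrite /gens /= !addrA ![v _ _ * _]mulrC.
Qed.

Lemma pi_horner_ker f : endo f -> forall (p : {poly R}) v,
  pi v = 0 -> pi (horner_mx (endo_mx f) p *m v) = 0.
Proof.
move=> hf p; elim/poly_ind: p => [|p c IH] v hv; first by rewrite rmorph0 mul0mx Rlinear0.
rewrite rmorphD rmorphM /= horner_mx_X horner_mx_C mulmxDl mul_scalar_mx.
rewrite (RlinearD pi_lin) (RlinearZ pi_lin) hv scaler0 addr0.
by rewrite -mulmxE -mulmxA IH // -endo_mxE // hv (Rlinear0 hf).
Qed.

Lemma endo_mx_poly_inverse f (q : {poly R}) : endo f ->
  horner_mx (endo_mx f) q *m endo_mx f = 1%:M ->
  endo_mx f *m horner_mx (endo_mx f) q = 1%:M -> E_unit f.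
Proof.
move=> hf BiB BBi; pose Binv := horner_mx (endo_mx f) q.
pose g m := pi (Binv *m coords m).
have g_pi v : g (pi v) = pi (Binv *m v).
  apply/eqP; rewrite -subr_eq0 -(RlinearN pi_lin) -(RlinearD pi_lin) -mulmxN -mulmxDr.
  by rewrite pi_horner_ker // (RlinearD pi_lin) (RlinearN pi_lin) pi_coords subrr.
exists g; split; last split.
- move=> r u v; rewrite -{1}(pi_coords u) -{1}(pi_coords v).
  by rewrite -(RlinearZ pi_lin) -(RlinearD pi_lin) g_pi mulmxDr -scalemxAr pi_lin.
- by move=> m; rewrite /g endo_mxE // mulmxA BBi mul1mx pi_coords.
- by move=> m; rewrite -{1}(pi_coords m) endo_mxE // g_pi mulmxA BiB mul1mx pi_coords.
Qed.

Lemma const_term_det_endo_mx f : endo f -> const_term (\det (endo_mx f)) = eps f ^+ 3.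
Proof.
move=> hf; have [h31 h32 h12 h22 h11] := endo_residues hf.
rewrite -det_map_mx det_mx3_sparse !mxE /gens /= -/(res1 _) -/(res2 _) -/(res3 _) //.
by rewrite h11 h22 /eps !exprS expr0 mulr1 mulrA.
Qed.

Lemma eps_E_unit f : endo f -> eps f != 0 -> E_unit f.
Proof.
move=> hf he.
have hc0 : const_term ((char_poly (endo_mx f))`_0) != 0.
  rewrite char_poly_det const_termM const_term_det_endo_mx // rmorphXn rmorphN rmorph1.
  by rewrite -signr_odd /= expr1 mulN1r oppr_eq0 expf_neq0.
have [s /char_poly_inverse [q [BiB BBi]]] := const_term_invertible hc0.
exact: endo_mx_poly_inverse BiB BBi.
Qed.

Lemma g1_neq0 : g1 <> 0.
Proof.
rewrite g1E => /comb0 [+ _]; rewrite mulr1 mulr0 addr0 => hx0.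
by have := hx 3; rewrite hx0 phi0 eqxx => /eqP; rewrite eq_sym oner_eq0.
Qed.

Lemma local_End_M : local_End M.
Proof.
split; first by move=> h; apply: g1_neq0; apply: h.
move=> f g hf hg nf ng /(E_unit_eps (endo_add hf hg)); rewrite eps_add.
have [ef|/(eps_E_unit hf)//] := eqVneq (eps f) 0.
by have [eg|/(eps_E_unit hg)//] := eqVneq (eps g) 0; rewrite ef eg addr0 eqxx.
Qed.

(** * Self-duality, cyclicity and the tensor product *)

(* The Gram matrix of [form] on [g1, g2, g3] is [[-y, 0, x], [0, x^2, y], [x, y, 0]]. *)
Definition form (a b c a' b' c' : R) :=
  x * (a * c' + c * a') + y * (b * c' + c * b' - a * a') + x * (x * (b * b')).

Lemma form_sym a b c a' b' c' : form a b c a' b' c' = form a' b' c' a b c.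
Proof. by rewrite /form; ring. Qed.

Lemma form_syzygy a b c a' b' c' : syzygy a b c -> form a b c a' b' c' = 0.
Proof.
move=> hs.
have q1 : - (y * a) + x * c = 0.
  by apply: nzd_x; apply: (@syzygy_eq0 a b c _ (- y) x b 0 0 hs); ring.
have q2 : x * (x * b) + y * c = 0.
  by apply: nzd_x; apply: (@syzygy_eq0 a b c _ 0 y 0 b 0 hs); ring.
transitivity (a' * (- (y * a) + x * c) + b' * (x * (x * b) + y * c) + c' * (x * a + y * b)).
  by rewrite /form; ring.
by rewrite q1 q2 hs.1 !mulr0 !addr0.
Qed.

Definition pairing (m m' : M) := form (pre1 m) (pre2 m) (pre3 m) (pre1 m') (pre2 m') (pre3 m').

Lemma pairing_comb a b c a' b' c' : pairing (comb a b c) (comb a' b' c') = form a b c a' b' c'.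
Proof.
rewrite /pairing; have h := pre_comb a b c; have h' := pre_comb a' b' c'.
apply/eqP; rewrite -subr_eq0; apply/eqP.
set A := pre1 _ in h *; set B := pre2 _ in h *; set C := pre3 _ in h *.
set A' := pre1 _ in h' *; set B' := pre2 _ in h' *; set C' := pre3 _ in h' *.
transitivity (form (A - a) (B - b) (C - c) A' B' C' + form (A' - a') (B' - b') (C' - c') a b c).
  by rewrite /form; ring.
by rewrite !form_syzygy // addr0.
Qed.

Lemma pairing_sym m m' : pairing m m' = pairing m' m.
Proof. exact: form_sym. Qed.

Lemma pairing_linr m r u v : pairing m (r *: u + v) = r * pairing m u + pairing m v.
Proof. by rewrite (combE m) (combE u) (combE v) combZ combD !pairing_comb /form; ring. Qed.

Lemma pairing_linl r u v m : pairing (r *: u + v) m = r * pairing u m + pairing v m.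
Proof. by rewrite !(pairing_sym _ m) pairing_linr. Qed.

Lemma pairing_ideal m m' : ideal2 x y (pairing m m').
Proof.
rewrite /pairing /form; set a := pre1 m; set b := pre2 m; set c := pre3 m.
set a' := pre1 m'; set b' := pre2 m'; set c' := pre3 m'.
by exists (a * c' + c * a' + x * (b * b')), (b * c' + c * b' - a * a'); ring.
Qed.

Lemma pairing_injective m m' : (forall u, pairing m u = pairing m' u) -> m = m'.
Proof.
move=> h; have h3 := h g3; have h2 := h g2.
rewrite (combE m) (combE m') g2E g3E !pairing_comb in h2 h3.
rewrite (combE m) (combE m'); apply/comb_eq.
have q3 : x * (pre1 m - pre1 m') + y * (pre2 m - pre2 m') = 0.
  transitivity (form (pre1 m) (pre2 m) (pre3 m) 0 0 1 - form (pre1 m') (pre2 m') (pre3 m') 0 0 1).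
    by rewrite /form; ring.
  by rewrite h3 subrr.
have q2 : y * (pre3 m - pre3 m') + x * (x * (pre2 m - pre2 m')) = 0.
  transitivity (form (pre1 m) (pre2 m) (pre3 m) 0 1 0 - form (pre1 m') (pre2 m') (pre3 m') 0 1 0).
    by rewrite /form; ring.
  by rewrite h2 subrr.
split => //; apply: nzd_y.
have : y * (z * (pre2 m - pre2 m') + x * (pre3 m - pre3 m')) =
  x * (y * (pre3 m - pre3 m') + x * (x * (pre2 m - pre2 m'))) -
  (x * (x * x) - y * z) * (pre2 m - pre2 m') by ring.
by move=> ->; rewrite q2 xxx_yz subrr mul0r mulr0 subrr.
Qed.

Lemma ideal2_relation_coef8 p1 p2 q1 q2 s1 s2 :
  y * (p1 * x + p2 * y) + - x * (q1 * x + q2 * y) + z * (s1 * x + s2 * y) = 0 ->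
  const_term p2 + const_term s1 = 0.
Proof.
move/(congr1 (phi^~ 8%N)); rewrite ![_ * x]mulrC ![_ * y]mulrC /=.
rewrite !(mulrDr, mulNr, phi_add, phiN, phi0, phi_mulxS, phi_mulyS, phi_mulzS).
rewrite ?phi_mulx_lt ?phi_muly_lt ?phi_mulz_lt // !(phi_gap _).1 !(phi_gap _).2.
by rewrite ?oppr0 !(add0r, addr0, subr0, sub0r) addrC.
Qed.

Lemma ideal2_relation_values G1 G2 G3 :
  ideal2 x y G1 -> ideal2 x y G2 -> ideal2 x y G3 ->
  y * G1 + - x * G2 + z * G3 = 0 -> exists v0 v1 v2,
  [/\ G1 = - (y * v0) + x * v2, G2 = y * v2 + x * (x * v1) & G3 = x * v0 + y * v1].
Proof.
move=> [p1 [p2 e1]] [q1 [q2 e2]] [s1 [s2 e3]] hrel.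
have h8 := hrel; rewrite e1 e2 e3 in h8; move/ideal2_relation_coef8: h8 => h8.
pose v1 := const_series (const_term s2).
have hs2 : const_term (s2 - v1) = 0 by rewrite raddfB /= const_term_const_series subrr.
have [b1 [b2 [b3 hb]]] := max_ideal_decomp hs2.
have hsp : const_term (s1 + p2) = 0 by rewrite raddfD /= addrC h8.
have [c1 [c2 [c3 hc]]] := max_ideal_decomp hsp.
pose v0 := s1 + y * b1 + z * b2 + x * (x * b3).
pose v2 := p1 + (y * c1 + z * c2 + x * (x * c3)) + (z * b1 + x * (x * b2) + x * (y * b3)).
have es2 : s2 = v1 + (x * b1 + y * b2 + z * b3) by rewrite -hb addrC subrK.
have ep2 : p2 = x * c1 + y * c2 + z * c3 - s1 by rewrite -hc addrC addKr.
have r3 : G3 = x * v0 + y * v1.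
  by rewrite e3 es2; apply: (@eq_mod_relations _ _ b2 (- b3) 0); rewrite /v0; ring.
have r1 : G1 = - (y * v0) + x * v2.
  rewrite e1 ep2; apply: (@eq_mod_relations _ _ (b1 + c2) (- (b2 + c3)) 0).
  by rewrite /v0 /v2; ring.
exists v0, v1, v2; split => //.
have xG2 : x * G2 = y * G1 + z * G3 by rewrite -[LHS]addr0 -hrel; ring.
have : x * (G2 - (y * v2 + x * (x * v1))) = 0.
  by rewrite mulrBr xG2 r1 r3; apply: (@eq_mod_relations _ _ (- v0) (- v1) 0); ring.
by move/nzd_x/subr0_eq.
Qed.

Lemma pairing_surjective (g : M -> R) : hom_into (ideal2 x y) g ->
  exists m, forall u, g u = pairing m u.
Proof.
move=> [g_lin g_I].
have g0 : g 0 = 0.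
  have h := g_lin 1 0 0; rewrite scale1r addr0 mul1r in h.
  by apply: (addrI (g 0)); rewrite -h addr0.
have gD u v : g (u + v) = g u + g v by have := g_lin 1 u v; rewrite scale1r mul1r.
have gZ r u : g (r *: u) = r * g u by rewrite -(addr0 (r *: u)) g_lin g0 addr0.
have g_comb a b c : g (comb a b c) = a * g g1 + b * g g2 + c * g g3 by rewrite /comb !gD !gZ.
have /(congr1 g) : comb y (- x) z = 0 by apply/comb0; split; ring.
rewrite g_comb g0 => hrel.
have [v0 [v1 [v2 [r1 r2 r3]]]] := ideal2_relation_values (g_I g1) (g_I g2) (g_I g3) hrel.
exists (comb v0 v1 v2) => u.
have -> : pairing (comb v0 v1 v2) u = pairing (comb v0 v1 v2) (comb (pre1 u) (pre2 u) (pre3 u)).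
  by rewrite -combE.
by rewrite {1}(combE u) g_comb pairing_comb r1 r2 r3 /form; ring.
Qed.

Lemma ssd_M : strongly_self_dual (ideal2 x y) pairing.
Proof.
split; first by move=> m; split; [exact: pairing_linr | exact: pairing_ideal].
split; first exact: pairing_linl.
split; first exact: pairing_injective.
split; first exact: pairing_surjective.
exact: pairing_sym.
Qed.

Lemma syzygy_rot a b c a' b' c' : syzygy a b c ->
  a' = c -> b' = - a -> c' = - (x * b) -> syzygy a' b' c'.
Proof.
move=> hs -> -> ->; split; apply: nzd_x.
  by apply: (@syzygy_eq0 a b c _ (- y) x b 0 0 hs); ring.
by apply: (@syzygy_eq0 a b c _ (- z) 0 0 (- b) 0 hs); ring.
Qed.

Lemma syzygy_shift a b c a' b' c' : syzygy a b c ->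
  a' = x * b -> b' = c -> c' = y * b -> syzygy a' b' c'.
Proof.
move=> hs -> -> ->; split; apply: nzd_x.
  by apply: (@syzygy_eq0 a b c _ 0 y 0 b 0 hs); ring.
by apply: (@syzygy_eq0 a b c _ 0 z 0 0 b hs); ring.
Qed.

(* Endomorphisms mapping [g3] to [g1] and to [g2] respectively. *)
Definition rot (m : M) := comb (pre3 m) (- pre1 m) (- (x * pre2 m)).
Definition shift (m : M) := comb (x * pre2 m) (pre3 m) (y * pre2 m).

Lemma rot_comb a b c : rot (comb a b c) = comb c (- a) (- (x * b)).
Proof. by apply/comb_eq; apply: (syzygy_rot (pre_comb a b c)); ring. Qed.

Lemma shift_comb a b c : shift (comb a b c) = comb (x * b) c (y * b).
Proof. by apply/comb_eq; apply: (syzygy_shift (pre_comb a b c)); ring. Qed.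

Lemma endo_rot : endo rot.
Proof.
move=> r u v; rewrite {2}(combE u) {2}(combE v) !rot_comb combZ combD.
by apply/comb_eq; apply: (syzygy_rot (pre_lin r u v)); ring.
Qed.

Lemma endo_shift : endo shift.
Proof.
move=> r u v; rewrite {2}(combE u) {2}(combE v) !shift_comb combZ combD.
by apply/comb_eq; apply: (syzygy_shift (pre_lin r u v)); ring.
Qed.

Lemma cyclic_M : cyclic_over_End M.
Proof.
exists g3 => m; have [a [b [c ->]]] := comb_surj m.
exists (fun n => a *: rot n + (b *: shift n + c *: n)); split.
  apply: endo_add; first exact: endo_scale _ endo_rot.
  by apply: endo_add; [exact: endo_scale _ endo_shift | exact: endo_scalar].
by rewrite g3E rot_comb shift_comb !mulr0 oppr0 -g1E -g2E -g3E addrA.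
Qed.

(* [pairing m g1 = x c - y a] for [m = comb a b c], so its [t^3]-coefficient
   is [res3 m]; this is what makes [res3] compatible with [star]. *)
Lemma res3_pairing m : res3 m = phi (pairing m g1) 3.
Proof.
have -> : pairing m g1 = pairing (comb (pre1 m) (pre2 m) (pre3 m)) (comb 1 0 0).
  by rewrite -combE g1E.
by rewrite pairing_comb /form !(mulr0, mulr1, addr0, add0r) phi_add phi_mulxS phi_muly_lt ?addr0.
Qed.

Lemma res3_star f a : endo f -> res3 (star pairing f a) = eps f * res3 a.
Proof.
move=> hf; rewrite res3_pairing (star_spec ssd_M) //.
have -> : pairing a (f g1) =
  pairing (comb (pre1 a) (pre2 a) (pre3 a)) (comb (pre1 (f g1)) (pre2 (f g1)) (pre3 (f g1))).
  by rewrite -!combE.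
rewrite pairing_comb /form !phi_add phi_mulxS phi_muly_lt // phi_mulxS phi_mulx_lt // addr0.
rewrite addr0 phi_add -!/(const_term _) !const_termM.
case: (endo_residues hf) => h1 _ _ _ h5.
by move: h1 h5; rewrite /res1 /res3 /eps => -> ->; rewrite mulr0 add0r mulrC.
Qed.

Definition collapse (m : M) := comb 0 0 (x * pre1 m + y * pre2 m).

Lemma endo_collapse : endo collapse.
Proof.
move=> r u v; rewrite /collapse combZ combD; apply/comb_eq; have [E1 _] := pre_lin r u v.
rewrite !mulr0 !addr0 !subrr; split; first by ring.
rewrite mulr0 add0r -[RHS](mulr0 x); congr (_ * _); rewrite -E1; ring.
Qed.

Lemma collapse_g3 : collapse g3 = 0.
Proof.
have [+ _] := pre_comb 0 0 1; rewrite !subr0 /collapse -g3E => ->.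
by rewrite /comb !scale0r !addr0.
Qed.

Lemma star_collapse_g1 : star pairing collapse g1 = x *: g3.
Proof.
apply: (star_eq ssd_M endo_collapse) => w; rewrite (alphaZl ssd_M) /collapse g1E g3E.
have -> : pairing (comb 0 0 1) w = pairing (comb 0 0 1) (comb (pre1 w) (pre2 w) (pre3 w)).
  by rewrite -combE.
by rewrite !pairing_comb /form; ring.
Qed.

(* [x (g3 (x) g3) = x g3 (x) g3 = collapse^* g1 (x) g3 = g1 (x) collapse g3 = 0],
   while [a (x) m |-> res3 a * res3 m] is balanced and does not vanish on [g3 (x) g3]. *)
Lemma tensor_torsion_M : tensor_has_nonzero_torsion pairing.
Proof.
exists [:: (g3, g3)], x; split; first exact: nzd_x.
split.
  apply: te_trans (tequiv_scale ssd_M _ _ _) _; rewrite -star_collapse_g1.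
  apply: te_trans (te_bal pairing g1 g3 endo_collapse) _.
  by rewrite collapse_g3; exact: tequiv_pair0r ssd_M _.
have PhiDl a a' m : res3 (a + a') * res3 m = res3 a * res3 m + res3 a' * res3 m.
  by rewrite res3D mulrDl.
have PhiDr a m m' : res3 a * res3 (m + m') = res3 a * res3 m + res3 a * res3 m'.
  by rewrite res3D mulrDr.
have Phi_bal f a m : endo f -> res3 (star pairing f a) * res3 m = res3 a * res3 (f m).
  by move=> hf; rewrite res3_star // res3_endo // mulrCA mulrA.
move/(tequiv_Phi PhiDl PhiDr Phi_bal).
by rewrite big_seq1 big_nil g3E res3_comb rmorph1 mulr1 => /eqP; rewrite oner_eq0.
Qed.

End Presentation.
End Generators.
End CoefficientMap.

Theorem mainTheorem8 (k : fieldType) (R : comNzRingType) (phi : R -> nat -> k)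
  (phi_add : forall a b n, phi (a + b) n = phi a n + phi b n)
  (phi_one : forall n, phi 1 n = (n == 0%N)%:R)
  (phi_mul : forall a b n,
     phi (a * b) n = \sum_(i < n.+1) phi a i * phi b (n - i)%N)
  (phi_inj : forall a b, (forall n, phi a n = phi b n) -> a = b)
  (phi_im : forall f : nat -> k,
     (exists a, forall n, phi a n = f n) <-> (f 1%N = 0 /\ f 2%N = 0))
  (x y z : R)
  (hx : forall n, phi x n = (n == 3%N)%:R)
  (hy : forall n, phi y n = (n == 4%N)%:R)
  (hz : forall n, phi z n = (n == 5%N)%:R)
  (M : lmodType R) (pi : 'cV[R]_3 -> M)
  (pi_lin : Rlinear pi)
  (pi_surj : forall m : M, exists v, pi v = m)
  (pi_ker : forall v, pi v = 0 <-> exists u, v = Amat x y z *m u) :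
  torsion_free M /\ indecomposable M /\ has_rank M 2 /\ min_gens M 3 /\
  local_End M /\ cyclic_over_End M /\
  exists alpha : M -> M -> R,
    strongly_self_dual (ideal2 x y) alpha /\
    Rstar_structure alpha /\ right_E_iso alpha /\
    tensor_has_nonzero_torsion alpha.
Proof.
have local : local_End M by eapply local_End_M; eassumption.
have ssd : strongly_self_dual (ideal2 x y) (pairing x y pi_surj).
  by eapply ssd_M; eassumption.
split; first by eapply torsion_free_M; eassumption.
split; first exact: local_End_indecomposable local.
split; first by eapply rank2_M; eassumption.
split; first by eapply min_gens3_M; eassumption.
split; first exact: local.
split; first by eapply cyclic_M; eassumption.
exists (pairing x y pi_surj); split; first exact: ssd.
split; first exact: ssd_Rstar_structure ssd.
split; first exact: ssd_right_E_iso ssd.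
by eapply tensor_torsion_M; eassumption.
Qed.
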